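(* Let $\varepsilon\in(0,1)$ and let $C=O\left(\frac{1}{\varepsilon}\right)$. Any one-pass streaming algorithm that outputs a $(1+\varepsilon)$-approximation of the number of distinct elements on streams whose frequency vector has $C$ coordinates with frequency more than $1$ must use $\Omega\left(\frac{1}{\varepsilon}\right)$ bits of space.
   Context: Streaming model: a stream of item insertions from the universe $[n]$ defines a frequency vector $f$ ($f_i$ is the number of occurrences of $i$); the number of distinct elements is $F_0=|\{i:f_i\neq 0\}|$. A $(1+\varepsilon)$-approximation to $F_0$ is a value $\hat F$ with $(1-\varepsilon)F_0\le\hat F\le(1+\varepsilon)F_0$, required to hold with constant probability (e.g., at least $\frac23$). *)

From HB Require Import structures.
From mathcomp Require Import all_boot all_order all_algebra.
Set Implicit Arguments. Unset Strict Implicit. Unset Printing Implicit Defensive.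
Import Order.TTheory GRing.Theory Num.Theory.
Local Open Scope ring_scope.

Definition bstate (s : nat) := {ffun 'I_s -> bool}.

(* A randomized one-pass streaming algorithm over universe [n] = 'I_n,
   with s bits of memory, whose (public) random seed ranges over the
   finite type Omega. *)
Record salg (R : realFieldType) (n s : nat) (Omega : finType) := SAlg {
  init : Omega -> bstate s;
  upd  : Omega -> bstate s -> 'I_n -> bstate s;
  out  : Omega -> bstate s -> R }.

Definition run (R : realFieldType) n s (Omega : finType) (A : salg R n s Omega)
  (w : Omega) (str : seq 'I_n) : bstate s :=
  foldl (upd A w) (init A w) str.

Definition freq n (str : seq 'I_n) (i : 'I_n) : nat := count_mem i str.

Definition F0 n (str : seq 'I_n) : nat := #|[set i : 'I_n | freq str i != 0%N]|.

Definition heavy n (str : seq 'I_n) : nat := #|[set i : 'I_n | 1 < freq str i]|%N.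

Definition is_distr (R : realFieldType) (Omega : finType) (p : Omega -> R) : Prop :=
  (forall w, 0 <= p w) /\ \sum_(w : Omega) p w = 1.

Definition approx (R : realFieldType) (eps : R) (F : nat) (x : R) : bool :=
  ((1 - eps) * F%:R <= x) && (x <= (1 + eps) * F%:R).

Definition succeeds_on (R : realFieldType) n s (Omega : finType)
  (A : salg R n s Omega) (p : Omega -> R) (eps : R) (str : seq 'I_n) : Prop :=
  2 / 3 <= \sum_(w : Omega | approx eps (F0 str) (out A w (run A w str))) p w.

(* Reduction from the one-way Index problem.  Alice turns x in {0,1}^m into the stream of the
   distinct items j (when x_j = 1) or m + j (when x_j = 0); Bob appends the item i.  The
   stream has at most one repeated item and F0 = m + (1 - x_i), so when (2m + 2) eps <= 1 a
   (1 + eps)-approximation reveals x_i: the memory state after Alice's part is an s-bit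
   message from which every x_i is decoded with probability 2/3.  Counting words x by their
   agreement with a decoded word shows that such a message needs Omega(m) bits, and m can be
   taken of order 1/eps. *)

From HB Require Import structures.
From mathcomp Require Import all_boot all_order all_algebra.
From mathcomp Require Import zify lra.
Set Implicit Arguments. Unset Strict Implicit.
Import Order.TTheory GRing.Theory Num.Theory.

Lemma F0_card n (str : seq 'I_n) : F0 str = #|str|.
Proof.
rewrite /F0 -cardsE; apply: eq_card => i.
by rewrite !inE /freq -lt0n -has_count has_pred1.
Qed.

Lemma heavy_uniq n (str : seq 'I_n) : uniq str -> heavy str = 0.
Proof.
move=> str_uniq; apply/eqP; rewrite cards_eq0; apply/eqP/setP => i.
by rewrite !inE /freq count_uniq_mem //; case: (i \in str).
Qed.

Lemma heavy_rcons_uniq n (str : seq 'I_n) j : uniq str -> heavy (rcons str j) <= 1.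
Proof.
move=> str_uniq; rewrite -(cards1 j); apply/subset_leq_card/subsetP => i.
rewrite !inE /freq -cats1 count_cat count_uniq_mem //= eq_sym.
by case: (i == j); case: (i \in str).
Qed.

Section IndexCounting.

Variable m : nat.
Implicit Types (x : {ffun 'I_m -> bool}) (T : 'I_m -> bool).

Definition agree x T : nat := \sum_(i < m) (x i == T i).

Lemma agree_le x T : agree x T <= m.
Proof.
rewrite /agree -[leqRHS]card_ord -sum1_card.
by apply: leq_sum => i _; case: (_ == _).
Qed.

Lemma sum_exp2_agree T : \sum_x 2 ^ agree x T = 3 ^ m.
Proof.
under eq_bigr => x _ do rewrite /agree expn_sum.
rewrite -(bigA_distr_bigA (fun i b => 2 ^ (b == T i))).
rewrite (eq_bigr (fun _ => 3)) ?prod_nat_const ?card_ord // => i _.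
by rewrite big_bool /=; case: (T i).
Qed.

Lemma sum_agree_gt a T : 2 ^ a.+1 * \sum_x (a < agree x T) <= 3 ^ m.
Proof.
rewrite -(sum_exp2_agree T) big_distrr /=; apply: leq_sum => x _.
by case: ltnP => [gt_a|]; rewrite ?muln1 ?muln0 // leq_exp2l.
Qed.

Variables (S : finType) (enc : {ffun 'I_m -> bool} -> S) (dec : S -> 'I_m -> bool).

(* A word decoded with more than [a] correct coordinates is one of the at most
   [3 ^ m / 2 ^ a.+1] words that agree that much with some [dec σ]. *)
Lemma sum_agree_decode a :
  2 ^ a.+1 * \sum_x agree x (dec (enc x)) <= 2 ^ a.+1 * a * 2 ^ m + m * #|S| * 3 ^ m.
Proof.
have agree_dec x : agree x (dec (enc x)) <= a + m * \sum_σ (a < agree x (dec σ)).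
  case: (ltnP a (agree x (dec (enc x)))) => [gt_a|le_a].
    rewrite (bigD1 (enc x)) //= gt_a mulnDr muln1 addnCA.
    exact: leq_trans (agree_le _ _) (leq_addr _ _).
  exact: leq_trans le_a (leq_addr _ _).
have sum_dec : \sum_x agree x (dec (enc x)) <=
    a * 2 ^ m + m * \sum_σ \sum_x (a < agree x (dec σ)).
  apply: leq_trans (leq_sum _ (fun x _ => agree_dec x)) _.
  rewrite big_split /= sum_nat_const card_ffun !card_ord card_bool mulnC.
  by rewrite -big_distrr /= exchange_big.
rewrite -mulnA; apply: leq_trans (leq_mul (leqnn _) sum_dec) _.
rewrite mulnDr leq_add2l mulnCA -mulnA leq_mul2l big_distrr /= -sum1_card big_distrl /=.
by apply/orP; right; apply: leq_sum => σ _; rewrite mul1n sum_agree_gt.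
Qed.

End IndexCounting.

Lemma exp3_le_exp2 k : 3 ^ (5 * k) <= 2 ^ (8 * k).
Proof. by rewrite !expnM; case: k => // k; rewrite leq_exp2r. Qed.

(* m = 40 q and a = 25 q: the expected agreement (2/3) m exceeds a by (5/3) q, and
   3 ^ 40q <= 2 ^ 64q leaves a factor 2 ^ q on the left. *)
Lemma index_bound_arith q s :
  2 * (40 * q * 2 ^ (40 * q)) * 2 ^ (25 * q).+1 <=
    3 * (2 ^ (25 * q).+1 * (25 * q) * 2 ^ (40 * q) + 40 * q * 2 ^ s * 3 ^ (40 * q)) ->
  q <= s + 4.
Proof.
have [->|q_gt0] := posnP q => // counting.
have split_exp : 2 ^ (40 * q) * 2 ^ (25 * q).+1 = 2 ^ q.+1 * 2 ^ (64 * q).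
  by rewrite -!expnD; congr (_ ^ _); lia.
have le_exp3 : 3 ^ (40 * q) <= 2 ^ (64 * q).
  by rewrite (_ : 40 * q = 5 * (8 * q)) 1?(_ : 64 * q = 8 * (8 * q)) ?exp3_le_exp2; lia.
have : 5 * q * (2 ^ q.+1 * 2 ^ (64 * q)) <= 5 * q * (24 * 2 ^ s * 2 ^ (64 * q)).
  rewrite -split_exp; move: counting le_exp3.
  move: (2 ^ (40 * q)) (2 ^ (25 * q).+1) (2 ^ s) (3 ^ (40 * q)) (2 ^ (64 * q)) => a b c d e.
  move=> counting /(leq_mul (leqnn (q * c))) le_de; lia.
rewrite leq_pmul2l ?muln_gt0 // leq_pmul2r ?expn_gt0 // => le_24.
by rewrite -ltnS -(@leq_exp2l 2) //; apply: leq_trans le_24 _; rewrite expnS expnD; lia.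
Qed.

Section IndexStream.

Variables (n m : nat).
Hypothesis le_mm_n : m + m <= n.
Implicit Types (x : {ffun 'I_m -> bool}) (i j : 'I_m).

Definition index_item x j : 'I_n :=
  widen_ord le_mm_n (if x j then lshift m j else rshift m j).

Definition index_query i : 'I_n := widen_ord le_mm_n (lshift m i).

Definition index_prefix x : seq 'I_n := [seq index_item x j | j <- enum 'I_m].

Definition index_stream x i := rcons (index_prefix x) (index_query i).

Lemma index_item_inj x : injective (index_item x).
Proof.
move=> j k /(congr1 val) /= /val_inj.
by case: (x j); case: (x k) => /eqP; rewrite eq_shift // => /eqP.
Qed.

Lemma index_prefix_uniq x : uniq (index_prefix x).
Proof. by rewrite map_inj_uniq ?enum_uniq //; apply: index_item_inj. Qed.

Lemma size_index_prefix x : size (index_prefix x) = m.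
Proof. by rewrite size_map size_enum_ord. Qed.

Lemma index_query_in_prefix x i : (index_query i \in index_prefix x) = x i.
Proof.
apply/mapP/idP => [[j _ /(congr1 val) /=]|xi].
  case: ifP => xj /= eq_ij; first by rewrite (_ : i = j) //; apply: val_inj.
  by have := ltn_ord i; rewrite eq_ij ltnNge leq_addr.
by exists i; rewrite ?mem_enum //; apply: val_inj; rewrite /= xi.
Qed.

Lemma F0_index_stream x i : F0 (index_stream x i) = m + ~~ x i.
Proof.
rewrite F0_card /index_stream -cats1.
case: (boolP (x i)) => xi /=.
  rewrite addn0 -(size_index_prefix x) -(card_uniqP (index_prefix_uniq x)).
  apply: eq_card => k; rewrite mem_cat inE orbC.
  by case: eqP => // ->; rewrite index_query_in_prefix.
rewrite (card_uniqP _) ?size_cat ?size_index_prefix ?addn1 //.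
by rewrite cat_uniq index_prefix_uniq /= orbF andbT index_query_in_prefix.
Qed.

Lemma heavy_index_stream x i : heavy (index_stream x i) <= 1.
Proof. exact/heavy_rcons_uniq/index_prefix_uniq. Qed.

End IndexStream.

Local Open Scope ring_scope.

Section RandomizedIndex.

Variables (R : realFieldType) (Omega : finType) (p : Omega -> R) (m : nat) (S : finType).
Variables (enc : Omega -> {ffun 'I_m -> bool} -> S) (dec : Omega -> S -> 'I_m -> bool).
Hypothesis p_distr : is_distr p.
Hypothesis dec_correct :
  forall (x : {ffun 'I_m -> bool}) (i : 'I_m), 2 / 3 <= \sum_(w | x i == dec w (enc w x) i) p w.

Lemma expected_agree_ge :
  (m * 2 ^ m)%:R * (2 / 3) <= \sum_w p w * (\sum_x agree x (dec w (enc w x)))%:R.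
Proof.
have -> : \sum_w p w * (\sum_x agree x (dec w (enc w x)))%:R =
    \sum_(x : {ffun 'I_m -> bool}) \sum_(i < m) \sum_(w | x i == dec w (enc w x) i) p w.
  under eq_bigr => w _ do rewrite natr_sum mulr_sumr; rewrite exchange_big /=.
  apply: eq_bigr => x _; under eq_bigr => w _ do rewrite natr_sum mulr_sumr.
  rewrite exchange_big /=; apply: eq_bigr => i _.
  by rewrite [RHS]big_mkcond; apply: eq_bigr => w _; rewrite mulr_natr mulrb.
apply: le_trans (ler_sum _ (fun x _ => ler_sum _ (fun i _ => dec_correct x i))).
rewrite !sumr_const card_ffun card_bool !card_ord.
by rewrite -mulrnA mulrC mulr_natr mulnC.
Qed.

Lemma index_message_bound a :
  (2 * (m * 2 ^ m) * 2 ^ a.+1 <= 3 * (2 ^ a.+1 * a * 2 ^ m + m * #|S| * 3 ^ m))%N.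
Proof.
have [p_ge0 p_sum1] := p_distr.
set B := (2 ^ a.+1 * a * 2 ^ m + m * #|S| * 3 ^ m)%N.
have : (m * 2 ^ m)%:R * (2 / 3) * (2 ^ a.+1)%:R <= B%:R :> R.
  apply: le_trans (ler_wpM2r (ler0n _ _) expected_agree_ge) _.
  have -> : B%:R = \sum_w p w * B%:R :> R by rewrite -mulr_suml p_sum1 mul1r.
  rewrite mulr_suml; apply: ler_sum => w _.
  by rewrite -mulrA -natrM mulnC ler_wpM2l // ler_nat sum_agree_decode.
by rewrite -(ler_nat R) !natrM; lra.
Qed.

End RandomizedIndex.

Lemma ler_sum_subpred (R : numDomainType) (I : finType) (P Q : pred I) (F : I -> R) :
  (forall i, 0 <= F i) -> (forall i, P i -> Q i) ->
  \sum_(i | P i) F i <= \sum_(i | Q i) F i.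
Proof.
move=> F_ge0 PQ; rewrite [leLHS]big_mkcond [leRHS]big_mkcond; apply: ler_sum => i _.
by case: (boolP (P i)) => [/PQ ->|_] //; case: ifP.
Qed.

Lemma approx_index_gap (R : realFieldType) (eps : R) (m : nat) (b : bool) o :
  0 < eps -> (2 * m + 2)%:R * eps <= 1 -> approx eps (m + ~~ b) o ->
  b = (o <= (1 + eps) * m%:R).
Proof.
move=> eps_gt0 gap; rewrite /approx; case: b => /=; first by rewrite addn0 => /andP[].
case/andP => lo _; apply/esym/negbTE; rewrite -ltNge; apply: lt_le_trans lo.
by move: gap; rewrite natrD natrM natrD; lra.
Qed.

Section StreamingToIndex.

Variables (R : realFieldType) (eps : R) (n s : nat) (Omega : finType).
Variables (p : Omega -> R) (A : salg R n s Omega) (m : nat).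
Hypothesis le_mm_n : (m + m <= n)%N.
Hypotheses (eps_gt0 : 0 < eps) (gap : (2 * m + 2)%:R * eps <= 1).

Definition index_encoder w (x : {ffun 'I_m -> bool}) : bstate s :=
  run A w (index_prefix le_mm_n x).

Definition index_decoder w (σ : bstate s) (i : 'I_m) : bool :=
  out A w (upd A w σ (index_query le_mm_n i)) <= (1 + eps) * m%:R.

Lemma index_decoder_correct w x i :
  approx eps (F0 (index_stream le_mm_n x i)) (out A w (run A w (index_stream le_mm_n x i))) ->
  x i = index_decoder w (index_encoder w x) i.
Proof. by rewrite F0_index_stream /run foldl_rcons; apply: approx_index_gap. Qed.

Lemma index_decoder_success x i :
  is_distr p -> succeeds_on A p eps (index_stream le_mm_n x i) ->
  2 / 3 <= \sum_(w | x i == index_decoder w (index_encoder w x) i) p w.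
Proof.
move=> [p_ge0 _] /le_trans; apply; apply: ler_sum_subpred => // w.
by move/index_decoder_correct ->.
Qed.

End StreamingToIndex.

Lemma index_space_bound (R : realFieldType) (eps : R) n s (Omega : finType)
    (p : Omega -> R) (A : salg R n s Omega) q :
  0 < eps -> (80 * q + 2)%:R * eps <= 1 -> 1 / eps <= n%:R -> is_distr p ->
  (forall str : seq 'I_n, (heavy str <= 1)%N -> succeeds_on A p eps str) ->
  (q <= s + 4)%N.
Proof.
move=> eps_gt0 gap n_ge p_distr succ.
have le_mm_n : (40 * q + 40 * q <= n)%N.
  rewrite -(ler_nat R); apply: le_trans n_ge; rewrite ler_pdivlMr //.
  by apply: le_trans gap; rewrite ler_pM2r // ler_nat; lia.
have gap_m : (2 * (40 * q) + 2)%:R * eps <= 1 by rewrite mulnA.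
apply: index_bound_arith.
rewrite (_ : 2 ^ s = #|bstate s|)%N; last by rewrite card_ffun card_bool card_ord.
apply: (index_message_bound p_distr (enc := index_encoder A le_mm_n)
          (dec := index_decoder eps A le_mm_n)) => x i.
by apply: index_decoder_success => //; apply/succ/heavy_index_stream.
Qed.

(* With s = 0 the runs on [::] and [:: i] end in the same state, but no output
   approximates both F0 = 0 and F0 = 1. *)
Lemma space_gt0 (R : realFieldType) (eps : R) n s (Omega : finType)
    (p : Omega -> R) (A : salg R n s Omega) (i : 'I_n) :
  eps < 1 -> is_distr p -> succeeds_on A p eps [::] -> succeeds_on A p eps [:: i] ->
  (0 < s)%N.
Proof.
case: s A => [|s] A // eps_lt1 [p_ge0 p_sum1].
have run_const w : run A w [:: i] = run A w [::] by apply/ffunP => -[].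
rewrite /succeeds_on !F0_card !(card_uniqP _) //=.
move=> succ0; under eq_bigl do rewrite run_const; move=> succ1.
set o := fun w => out A w (run A w [::]).
have : \sum_(w | approx eps 0 (o w)) p w + \sum_(w | approx eps 1 (o w)) p w <= 1.
  rewrite -p_sum1 !(big_mkcond (fun w => approx _ _ _)) -big_split /=.
  apply: ler_sum => w _; rewrite /approx !mulr0 !mulr1.
  case: ifP => [/andP[_ o_le0]|_]; case: ifPn => [/andP[o_ge _]|_];
    by rewrite ?addr0 ?add0r //; lra.
lra.
Qed.

(* Otherwise q = s + 5 would satisfy (80 q + 2) eps <= 1. *)
Lemma inv500_le_space (R : realFieldType) (eps : R) (s : nat) :
  0 < eps -> (0 < s)%N -> (forall q, (80 * q + 2)%:R * eps <= 1 -> (q <= s + 4)%N) ->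
  500%:R^-1 / eps <= s%:R.
Proof.
move=> eps_gt0 s_gt0 bound; rewrite ler_pdivrMr // leNgt; apply/negP => small.
have eps_le : eps <= s%:R * eps by apply: ler_peMl; [exact: ltW | rewrite ler1n].
suff /bound : (80 * (s + 5) + 2)%:R * eps <= 1 by rewrite leq_add2l.
by rewrite natrD natrM natrD; lra.
Qed.

Theorem theorem5p13 :
  forall K : rat, 0 < K ->
  exists c : rat, 0 < c /\
  forall (R : realFieldType) (eps : R) (C n s : nat) (Omega : finType)
         (p : Omega -> R) (A : salg R n s Omega),
    0 < eps < 1 ->
    (1 <= C)%N ->
    C%:R <= ratr K / eps ->
    1 / eps <= n%:R ->
    is_distr p ->
    (forall str : seq 'I_n, (heavy str <= C)%N -> succeeds_on A p eps str) ->
    ratr c / eps <= s%:R.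
Proof.
move=> K _; exists 500%:R^-1; split; first by rewrite invr_gt0 ltr0n.
move=> R eps C n s Omega p A /andP[eps_gt0 eps_lt1] C_ge1 _ n_ge p_distr succ.
have succ1 str : (heavy str <= 1)%N -> succeeds_on A p eps str.
  by move=> le1; apply/succ/(leq_trans le1).
rewrite fmorphV rmorph_nat; apply: inv500_le_space => // [|q gap].
  have n_gt0 : (0 < n)%N.
    by rewrite -(ltr_nat R); apply: lt_le_trans n_ge; rewrite divr_gt0.
  by apply: (space_gt0 (i := Ordinal n_gt0) eps_lt1 p_distr); apply/succ1; rewrite heavy_uniq.
exact: index_space_bound gap n_ge p_distr succ1.
Qed.
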